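(* Consider an HTSP instance in which all speeds are powers of two, and let $M>0$ be at least its optimal makespan. Then for every level $\ell\ge0$, $\mathrm{MST}(G/V_{<\ell})\le M\sum_{j\ge \ell-1}2^j\mu_j$.
   Context: HTSP: the input is a finite metric space $(V,d)$, a depot $r\in V$, and $k$ vehicles with speeds $\lambda_1,\dots,\lambda_k\ge1$. A solution is a collection of tours, each starting and ending at $r$, that cover $V$. Its makespan is $\max_i d(\tau_i)/\lambda_i$. Here all speeds are powers of two, $\mu_j$ is the number of vehicles of speed $2^j$, and $\mu_{-1}=0$. Levels relative to $M$: $V_0=\{u:d(r,u)\le M\}$, and for $i\ge1$, $V_i=\{u:2^{i-1}M<d(r,u)\le2^iM\}$. Also $V_{<\ell}=\bigcup_{j<\ell}V_j$, with $V_{<0}=\emptyset$. $G$ is the complete graph on $V$ weighted by $d$. $G/U$ contracts $U$ to a single vertex, keeping parallel edges. $\mathrm{MST}$ denotes the minimum spanning tree weight. *)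

From HB Require Import structures.
From mathcomp Require Import all_boot all_order all_algebra.
Set Implicit Arguments. Unset Strict Implicit. Unset Printing Implicit Defensive.
Import Order.TTheory GRing.Theory Num.Theory.
Local Open Scope ring_scope.

Section HTSP.
Variables (R : realFieldType) (V : finType) (d : V -> V -> R).

Definition is_metric : Prop :=
  [/\ forall x y, d x y = 0 <-> x = y,
      forall x y, d x y = d y x &
      forall x y z, d x z <= d x y + d y z].

Fixpoint walk_len (x : V) (s : seq V) : R :=
  if s is y :: s' then d x y + walk_len y s' else 0.

Definition tour_len (r : V) (s : seq V) : R := walk_len r (rcons s r).

Definition makespan (r : V) (k : nat) (lam : 'I_k -> R) (tau : 'I_k -> seq V) : R :=
  \big[Num.max/0]_(i < k) (tour_len r (tau i) / lam i).

Definition covers (r : V) (k : nat) (tau : 'I_k -> seq V) : Prop :=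
  forall v : V, exists i : 'I_k, v \in r :: tau i.

Definition in_level (r : V) (M : R) (j : nat) (u : V) : bool :=
  if j is j'.+1 then (2 ^+ j' * M < d r u) && (d r u <= 2 ^+ j * M)
  else d r u <= M.

Definition V_lt (r : V) (M : R) (l : nat) : {set V} :=
  [set u | [exists j : 'I_l, in_level r M j u]].

(* Quotient map V -> vertices of G/U : the contracted vertex is None *)
Definition contr (U : {set V}) (u : V) : option V :=
  if u \in U then None else Some u.

Definition contr_vertices (U : {set V}) : {set option V} := [set contr U u | u : V].

(* an edge of G/U is an (unordered) edge {u,v} of G, represented by one
   orientation (u,v); its endpoints in G/U are contr u, contr v (parallel
   edges kept, loops discarded) *)
Definition contr_adj (U : {set V}) (F : {set V * V}) : rel (option V) :=
  fun a b => [exists p in F, ((contr U p.1 == a) && (contr U p.2 == b))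
                           || ((contr U p.1 == b) && (contr U p.2 == a))].

Definition spanning_tree_contr (U : {set V}) (F : {set V * V}) : Prop :=
  [/\ forall p, p \in F -> contr U p.1 != contr U p.2,
      forall p, p \in F -> (p.2, p.1) \notin F,
      forall a b, a \in contr_vertices U -> b \in contr_vertices U ->
                  connect (contr_adj U F) a b &
      #|F| = (#|contr_vertices U| - 1)%N].

Definition weight (F : {set V * V}) : R := \sum_(p in F) d p.1 p.2.

End HTSP.

(* mu_j = number of vehicles of speed 2^j, speeds given as 2^(e i) *)
Definition mu (k : nat) (e : 'I_k -> nat) (j : nat) : nat := #|[set i | e i == j]|.

From HB Require Import structures.
From mathcomp Require Import all_boot all_order all_algebra.
Import Order.TTheory GRing.Theory Num.Theory.
Local Open Scope ring_scope.

(* Concatenate the tours of all vehicles of speed at least 2^(l-1) into one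
   closed walk from r. A vehicle of speed 2^j has a tour of length at most
   2^j M, so it never leaves the ball of radius 2^j M around r; hence every
   vertex outside V_{<l} lies on the concatenated walk, whose length is at most
   M \sum_{j >= l-1} 2^j mu_j. Keeping, for each vertex of G/V_{<l} other than
   the contracted one, the walk edge through which it is first entered yields a
   spanning tree of G/V_{<l} no longer than the walk. *)

Section FirstVisitEdges.
Context {V T : finType} (c : V -> T).

Fixpoint first_visit_edges (x : V) (s : seq V) (seen : seq T) : seq (V * V) :=
  if s is y :: s' then
    if c y \in seen then first_visit_edges y s' seen
    else (x, y) :: first_visit_edges y s' (c y :: seen)
  else [::].

Local Notation heads x s seen := [seq c p.2 | p <- first_visit_edges x s seen].

Lemma first_visit_edges_head x s seen p : p \in first_visit_edges x s seen ->
  (c p.2 \notin seen) && (p.2 \in s).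
Proof.
elim: s x seen => //= y s IH x seen; case: ifP => [cy_seen | cy_new].
  by move/IH => /andP[-> ps]; rewrite in_cons ps orbT.
rewrite in_cons => /orP[/eqP -> /= | /IH]; first by rewrite cy_new in_cons eqxx.
by rewrite in_cons negb_or => /andP[/andP[_ ->] ps]; rewrite in_cons ps orbT.
Qed.

Lemma first_visit_edges_nonloop x s seen p : c x \in seen ->
  p \in first_visit_edges x s seen -> c p.1 != c p.2.
Proof.
elim: s x seen => //= y s IH x seen cx_seen; case: ifP => cy_seen; first exact: IH.
rewrite in_cons => /orP[/eqP -> /= | ]; last by apply: IH; rewrite mem_head.
by apply: contraFneq cy_seen => <-.
Qed.

Lemma first_visit_edges_rev x s seen p : c x \in seen ->
  p \in first_visit_edges x s seen -> (p.2, p.1) \notin first_visit_edges x s seen.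
Proof.
elim: s x seen => //= y s IH x seen cx_seen; case: ifP => cy_seen; first exact: IH.
have cy_seen' : c y \in c y :: seen by rewrite mem_head.
rewrite !in_cons => /orP[/eqP -> /= | pE].
  apply/negP => /orP[/eqP [y_x _] | /first_visit_edges_head /andP[] /=].
    by rewrite y_x cx_seen in cy_seen.
  by rewrite in_cons cx_seen orbT.
rewrite negb_or (IH _ _ cy_seen' pE) andbT; apply/eqP => -[p2_x _].
by move/first_visit_edges_head: pE => /andP[]; rewrite p2_x in_cons cx_seen orbT.
Qed.

Lemma uniq_first_visit_heads x s seen : uniq (heads x s seen).
Proof.
elim: s x seen => //= y s IH x seen; case: ifP => cy_seen //=.
rewrite IH andbT; apply/mapP => -[p /first_visit_edges_head /andP[]].
by move=> + _ cy_p2; rewrite -cy_p2 mem_head.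
Qed.

Lemma first_visit_heads_cover x s seen y : y \in s ->
  (c y \in seen) || (c y \in heads x s seen).
Proof.
elim: s x seen => //= z s IH x seen; rewrite in_cons => /orP[/eqP -> | ys].
  by case: ifP => //= _; rewrite mem_head.
case: ifP => cz_seen; first exact: IH.
move: (IH z (c z :: seen) ys); rewrite /= !in_cons.
by case: (c y == c z); case: (c y \in seen); case: (c y \in _).
Qed.

Lemma connect_first_visits (e : rel T) t x s seen :
    (forall p, p \in first_visit_edges x s seen -> e (c p.2) (c p.1)) ->
    c x \in seen -> (forall z, z \in seen -> connect e z t) ->
  forall y, y \in s -> connect e (c y) t.
Proof.
elim: s x seen => //= z s IH x seen; case: ifP => cz_seen edge_e cx_seen seen_t y.
  rewrite in_cons => /orP[/eqP -> | ]; first exact: seen_t.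
  exact: IH z seen edge_e cz_seen seen_t y.
have cz_t : connect e (c z) t.
  apply: connect_trans (seen_t _ cx_seen); apply: connect1.
  by apply: (edge_e (x, z)); rewrite mem_head.
rewrite in_cons => /orP[/eqP -> // | ]; apply: (IH z (c z :: seen)).
- by move=> p pE; apply: edge_e; rewrite in_cons pE orbT.
- exact: mem_head.
- by move=> w; rewrite in_cons => /orP[/eqP -> | /seen_t].
Qed.

Lemma first_visit_edges_weight (R : realFieldType) (d : V -> V -> R) x s seen :
  (forall a b, 0 <= d a b) ->
  \sum_(p <- first_visit_edges x s seen) d p.1 p.2 <= walk_len d x s.
Proof.
move=> d_ge0; elim: s x seen => /= [|y s IH] x seen; first by rewrite big_nil.
case: ifP => _; last by rewrite big_cons lerD2l.
by apply: le_trans (IH _ _) _; rewrite lerDr.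
Qed.

End FirstVisitEdges.

Section Metric.
Context {R : realFieldType} {V : finType} (d : V -> V -> R).
Hypothesis d_metric : is_metric d.

Lemma metric_xx x : d x x = 0.
Proof. by case: d_metric => d_eq0 _ _; apply/d_eq0. Qed.

Lemma metric_ge0 a b : 0 <= d a b.
Proof.
case: d_metric => _ d_sym d_tri.
have := d_tri a b a; rewrite (d_sym b a) metric_xx -mulr2n.
by rewrite pmulrn_lge0.
Qed.

Lemma walk_len_ge0 x s : 0 <= walk_len d x s.
Proof. by elim: s x => //= y s IH x; rewrite addr_ge0 ?metric_ge0. Qed.

Lemma walk_len_cat x s1 s2 :
  walk_len d x (s1 ++ s2) = walk_len d x s1 + walk_len d (last x s1) s2.
Proof. by elim: s1 x => /= [|y s1 IH] x; rewrite ?add0r // IH addrA. Qed.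

Lemma walk_len_flatten_tours (I : Type) r (tau : I -> seq V) (s : seq I) :
  walk_len d r (flatten [seq rcons (tau i) r | i <- s]) =
  \sum_(i <- s) tour_len d r (tau i).
Proof.
elim: s => [|i s IH] /=; first by rewrite big_nil.
by rewrite big_cons walk_len_cat last_rcons IH.
Qed.

Lemma dist_le_walk_len x s u : u \in s -> d x u <= walk_len d x s.
Proof.
elim: s x => //= y s IH x; rewrite in_cons => /orP[/eqP -> | us].
  by rewrite lerDl walk_len_ge0.
case: d_metric => _ _ d_tri.
by apply: le_trans (d_tri x y u) _; rewrite lerD2l IH.
Qed.

Lemma walk_spanning_tree_contr {U : {set V}} {x s} :
    (forall v, contr U v != contr U x -> v \in s) ->
  exists F, spanning_tree_contr U F /\ weight d F <= walk_len d x s.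
Proof.
move=> s_cover; set c := contr U; set E := first_visit_edges c x s [:: c x].
set heads := [seq c p.2 | p <- E].
have cx_seen : c x \in [:: c x] by rewrite mem_head.
have uniq_heads : uniq heads := uniq_first_visit_heads c x s [:: c x].
have uniqE : uniq E := map_uniq uniq_heads.
have cx_heads : c x \notin heads.
  apply/mapP => -[p /first_visit_edges_head /andP[cp_new _] cx_cp].
  by rewrite -cx_cp mem_head in cp_new.
have vertices : contr_vertices U = c x |: [set z in heads].
  apply/setP => z; rewrite in_setU1 inE; apply/imsetP/orP.
    case=> u _ ->; rewrite -/c; case: (eqVneq (c u) (c x)) => [-> | cux].
      by left.
    right; move: (first_visit_heads_cover c x s [:: c x] u (s_cover u cux)).
    by rewrite mem_seq1 (negbTE cux).
  by case=> [/eqP -> | /mapP [p _ ->]]; [exists x | exists p.2].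
set A := contr_adj U [set p in E].
have A_sym : symmetric A by move=> a b; apply: eq_existsb => p; rewrite orbC.
have to_x u : connect A (c u) (c x).
  case: (eqVneq (c u) (c x)) => [-> | cux]; first exact: connect0.
  apply: (connect_first_visits c A (c x) x s [:: c x]) => //.
  - by move=> p pE; apply/existsP; exists p; rewrite inE pE !eqxx orbT.
  - by move=> z; rewrite mem_seq1 => /eqP ->; exact: connect0.
  - exact: s_cover.
exists [set p in E]; split; first split.
- by move=> p; rewrite inE; apply: first_visit_edges_nonloop.
- by move=> p; rewrite !inE; apply: first_visit_edges_rev.
- move=> a b /imsetP [u _ ->] /imsetP [v _ ->]; apply: connect_trans (to_x u) _.
  by rewrite (sym_connect_sym A_sym); apply: to_x.
- rewrite vertices cardsU1 inE (negbTE cx_heads) !cardsE.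
  by rewrite (card_uniqP uniqE) (card_uniqP uniq_heads) size_map add1n subn1.
rewrite /weight (eq_bigl (mem E)) => [|p]; last by rewrite inE.
by rewrite -big_uniq //; apply: first_visit_edges_weight metric_ge0.
Qed.

Lemma V_lt_dist r M u l : 0 <= M ->
  d r u <= 2 ^+ l * M -> u \in V_lt d r M l.+1.
Proof.
move=> M_ge0; elim: l => [|l IH] du.
  by rewrite inE; apply/existsP; exists ord0; rewrite /= -[M]mul1r.
case: (leP (d r u) (2 ^+ l * M)) => [/IH | du_gt]; rewrite !inE.
  by case/existsP => j uj; apply/existsP; exists (widen_ord (leqnSn _) j).
by apply/existsP; exists ord_max; rewrite /= du_gt du.
Qed.

Lemma subset_V_lt r M {l1 l2} : (l1 <= l2)%N -> V_lt d r M l1 \subset V_lt d r M l2.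
Proof.
move=> l12; apply/subsetP => u; rewrite !inE => /existsP [j uj].
by apply/existsP; exists (widen_ord l12 j).
Qed.

End Metric.

Lemma sum_mu_by_vehicle (R : realFieldType) k (e : 'I_k -> nat) (F : nat -> R) a b :
    (forall i, e i < b)%N ->
  \sum_(a <= j < b) F j * (mu e j)%:R = \sum_(i | (a <= e i)%N) F (e i).
Proof.
move=> e_lt_b.
transitivity (\sum_(a <= j < b) \sum_i (if e i == j then F (e i) else 0)).
  apply: eq_bigr => j _; rewrite -big_mkcond (eq_bigr (fun=> F j)) => [|i /eqP-> //].
  by rewrite sumr_const mulr_natr /mu cardsE.
rewrite exchange_big [RHS]big_mkcond /=; apply: eq_bigr => i _.
case: leqP => [a_le | lt_a].
  rewrite (bigD1_seq (e i)) ?iota_uniq ?mem_index_iota ?a_le ?e_lt_b //= eqxx.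
  by rewrite big1 ?addr0 // => j /negbTE; rewrite eq_sym => ->.
rewrite big_seq_cond big1 // => j /andP[]; rewrite mem_index_iota => /andP[aj _] _.
by case: eqP => // ej; move: lt_a; rewrite ej ltnNge aj.
Qed.

Section Fleet.
Context {R : realFieldType} {V : finType} (d : V -> V -> R) (r : V).
Context {k : nat} (e : 'I_k -> nat) (M : R) (tau : 'I_k -> seq V).
Hypotheses (d_metric : is_metric d) (M_gt0 : 0 < M) (tau_cover : covers r tau).
Hypothesis tau_makespan : makespan d r (fun i => 2 ^+ e i) tau <= M.

Lemma tour_len_le i : tour_len d r (tau i) <= 2 ^+ e i * M.
Proof.
rewrite mulrC -ler_pdivrMr ?exprn_gt0 //; apply: le_trans tau_makespan.
by rewrite /makespan; apply: le_bigmax.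
Qed.

Lemma tour_in_V_lt i u : u \in tau i -> u \in V_lt d r M (e i).+1.
Proof.
move=> u_tau; apply: V_lt_dist => //; first exact: ltW.
apply: le_trans (tour_len_le i).
by apply: dist_le_walk_len; rewrite // mem_rcons in_cons u_tau orbT.
Qed.

Definition fast_walk l :=
  flatten [seq rcons (tau i) r | i <- enum 'I_k & (l.-1 <= e i)%N].

Lemma root_in_V_lt l : (0 < l)%N -> r \in V_lt d r M l.
Proof.
move=> l_gt0; apply: (subsetP (subset_V_lt d r M l_gt0)).
by apply: V_lt_dist; rewrite ?metric_xx ?expr0 ?mul1r ?ltW.
Qed.

Lemma fast_walk_cover l u :
  contr (V_lt d r M l) u != contr (V_lt d r M l) r -> u \in fast_walk l.
Proof.
move=> cu_ne_cr; set U := V_lt d r M l.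
have u_notin_U : u \notin U.
  apply: contra cu_ne_cr => uU; move: (uU); rewrite inE => /existsP [[j lt_jl] _].
  by rewrite /contr uU root_in_V_lt // (leq_ltn_trans (leq0n j) lt_jl).
have u_ne_r : u != r by apply: contraNneq cu_ne_cr => ->.
have [i] := tau_cover u; rewrite in_cons (negbTE u_ne_r) /= => u_tau.
case: (leqP l.-1 (e i)) => [fast | slow].
  apply/flatten_mapP; exists i; first by rewrite mem_filter fast mem_enum.
  by rewrite mem_rcons in_cons u_tau orbT.
have ei_lt_l : ((e i).+1 <= l)%N by apply: leq_trans slow (leq_pred l).
have := subsetP (subset_V_lt d r M ei_lt_l) _ (tour_in_V_lt _ _ u_tau).
by rewrite (negbTE u_notin_U).
Qed.

Lemma fast_walk_len l : walk_len d r (fast_walk l) <=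
  M * \sum_(l.-1 <= j < (\max_(i < k) e i).+1) (2 ^+ j * (mu e j)%:R).
Proof.
rewrite walk_len_flatten_tours sum_mu_by_vehicle => [|i]; last first.
  by rewrite ltnS leq_bigmax.
rewrite big_filter big_enum_cond /= mulr_sumr.
by apply: ler_sum => i _; rewrite mulrC tour_len_le.
Qed.

End Fleet.

Theorem lemma3 (R : realFieldType) (V : finType) (d : V -> V -> R) (r : V)
    (k : nat) (e : 'I_k -> nat) (M : R) :
  is_metric d ->
  0 < M ->
  (exists tau : 'I_k -> seq V,
      covers r tau /\ makespan d r (fun i => 2 ^+ e i) tau <= M) ->
  forall l : nat,
  exists F : {set V * V},
    spanning_tree_contr (V_lt d r M l) F /\
    weight d F <= M * \sum_(l.-1 <= j < (\max_(i < k) e i).+1)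
                        (2 ^+ j * (mu e j)%:R).
Proof.
move=> d_metric M_gt0 [tau [tau_cover tau_makespan]] l.
have cover := fast_walk_cover d r e M tau d_metric M_gt0 tau_cover tau_makespan l.
have [F [F_tree F_weight]] := walk_spanning_tree_contr d d_metric cover.
exists F; split=> //; apply: le_trans F_weight _; exact: fast_walk_len.
Qed.
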